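(* Let $d\ge1$, $I=[0,1]$, and for $v\in\{0,2\}^d$ let $h_v(\mathbf{x})=(\mathbf{x}+v)/3$; for a word $w=(v_1,\dots,v_n)\in(\{0,2\}^d)^n$ write $h_w=h_{v_1}\circ\cdots\circ h_{v_n}$. There exists a constant $C_d$ depending only on $d$ such that for every affine hyperplane $\mathcal{L}\subseteq\mathbb{R}^d$ and every $n\in\mathbb{N}$, with $\varepsilon=3^{-n}$, the open $\varepsilon$-neighborhood $\mathcal{L}^{(\varepsilon)}$ intersected with $\mathcal{C}^d$ can be covered by at most $C_d2^{(d-1)n}$ cubes of the form $h_w(I^d)$ with $w\in(\{0,2\}^d)^n$.
   Context: $\mathcal{C}$ is the middle-thirds Cantor set; $\mathcal{C}^d$ is the limit set of the maps $h_v$, $v\in\{0,2\}^d$. $\mathcal{L}^{(\varepsilon)}$ denotes the open Euclidean $\varepsilon$-neighborhood of $\mathcal{L}$. *)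

From HB Require Import structures.
From mathcomp Require Import all_boot all_order all_algebra.
From mathcomp Require Import reals Rstruct.
Set Implicit Arguments. Unset Strict Implicit. Unset Printing Implicit Defensive.
Import Order.TTheory GRing.Theory Num.Theory.
Local Open Scope ring_scope.

Notation RR := Rdefinitions.R.

Definition point (d : nat) := 'I_d -> RR.

(* A digit vector v in {0,2}^d, encoded by a boolean per coordinate:
   true <-> coordinate 2, false <-> coordinate 0. *)
Definition digit (d : nat) := {ffun 'I_d -> bool}.

Definition digit_val d (v : digit d) (i : 'I_d) : RR := if v i then 2 else 0.

Definition h d (v : digit d) (x : point d) : point d :=
  fun i => (x i + digit_val v i) / 3.

Definition hw d (w : seq (digit d)) (x : point d) : point d :=
  foldr (@h d) x w.

Definition unit_cube d (y : point d) : Prop := forall i, 0 <= y i <= 1.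

Definition in_cube d (w : seq (digit d)) (x : point d) : Prop :=
  exists y, unit_cube y /\ x = hw w y.

(* C^d: the limit set (attractor) of the IFS {h_v : v in {0,2}^d},
   i.e. the intersection over n of the unions of the level-n cubes. *)
Definition cantor_d d (x : point d) : Prop :=
  forall n : nat, exists w : n.-tuple (digit d), in_cube (tval w) x.

Definition dist d (x y : point d) : RR :=
  Num.sqrt (\sum_(i < d) (x i - y i) ^+ 2).

Definition hyperplane d (a : point d) (b : RR) (x : point d) : Prop :=
  \sum_(i < d) a i * x i = b.

Definition nbhd d (L : point d -> Prop) (eps : RR) (x : point d) : Prop :=
  exists y, L y /\ dist x y < eps.

From HB Require Import structures.
From mathcomp Require Import all_boot all_order all_algebra.
From mathcomp Require Import reals Rstruct.
From mathcomp Require Import ring lra zify.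
Import Order.TTheory GRing.Theory Num.Theory.
Set Implicit Arguments. Unset Strict Implicit.
Local Open Scope ring_scope.

(** A point of the level-n cube h_w(I^d) has coordinates
    x_i = (y_i + E_i) / 3^n with y in I^d, where E_i is the integer whose
    ternary digits (0 or 2) are the i-th coordinates of the letters of w.
    If x lies within 3^-n of the hyperplane <a, x> = b, then
    |sum_i a_i E_i - 3^n b| <= 2 sum_i |a_i|.  Choose i0 with |a_i0| maximal:
    once the other d - 1 columns of w are fixed, E_i0 is confined to a window
    of length 4d, so w is determined by those columns (2^((d-1)n) choices)
    together with E_i0 modulo 4d + 1. *)

Fixpoint ternary (s : seq bool) : nat :=
  if s is b :: s' then ((if b then 2 else 0) * 3 ^ size s' + ternary s')%N
  else 0%N.

Lemma ternary_lt (s : seq bool) : (ternary s < 3 ^ size s)%N.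
Proof. by elim: s => [|b s IH] //=; rewrite expnS; case: b; lia. Qed.

Lemma ternary_inj (s t : seq bool) :
  size s = size t -> ternary s = ternary t -> s = t.
Proof.
elim: s t => [|b s IH] [|c t] //= [size_st]; rewrite -size_st => eq_st.
have := ternary_lt s; have := ternary_lt t; rewrite -size_st => lt_t lt_s.
have eq_bc : b = c by move: eq_st; case: b; case: c => //= ?; lia.
by subst c; rewrite (IH t) //; move: eq_st; case: b; lia.
Qed.

Lemma eq_modn_window (m n k : nat) :
  (m <= n + k)%N -> (n <= m + k)%N -> m = n %[mod k.+1] -> m = n.
Proof.
wlog le_mn : m n / (m <= n)%N => [hwlog|].
  by case/orP: (leq_total m n) => ? ? ? ?; [|symmetry]; apply: hwlog.
move=> _ le_nmk /esym/eqP; rewrite eqn_mod_dvd // => dvd_k.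
have [|/dvdn_leq/(_ dvd_k)] := posnP (n - m); lia.
Qed.

Lemma card_le_window (T U : finType) (W : {set T}) (f : T -> U)
    (e : T -> nat) (k : nat) :
  {in W &, forall w1 w2, f w1 = f w2 -> (e w1 <= e w2 + k)%N} ->
  {in W &, forall w1 w2, f w1 = f w2 -> e w1 = e w2 -> w1 = w2} ->
  (#|W| <= #|U| * k.+1)%N.
Proof.
move=> window f_e_inj.
pose g w := (f w, inord (e w %% k.+1) : 'I_k.+1).
have g_inj : {in W &, injective g}.
  move=> w1 w2 W1 W2 [f12 /(congr1 val)]; rewrite /= !inordK ?ltn_pmod // => e12.
  apply: f_e_inj => //; apply: eq_modn_window e12.
    exact: window.
  exact: window W2 W1 (esym f12).
rewrite -(card_in_imset g_inj); apply: leq_trans (max_card _) _.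
by rewrite card_prod card_ord.
Qed.

Section Columns.
Variable d : nat.

Definition column (i : 'I_d) (w : seq (digit d)) : seq bool :=
  [seq v i | v : digit d <- w].

Definition code (i : 'I_d) (w : seq (digit d)) : nat := ternary (column i w).

Lemma columns_inj (w1 w2 : seq (digit d)) :
  size w1 = size w2 -> (forall i, column i w1 = column i w2) -> w1 = w2.
Proof.
elim: w1 w2 => [|v w IH] [|v' w'] //= [size_ww'] col_ww'.
have -> : v = v' by apply/ffunP => i; case: (col_ww' i).
by rewrite (IH w') // => i; case: (col_ww' i).
Qed.

Lemma hw_coord (w : seq (digit d)) (y : point d) (i : 'I_d) :
  hw w y i = (y i + (code i w)%:R) / 3 ^+ size w.
Proof.
elim: w => [|v w IH] /=; first by rewrite /code /= expr0 divr1 addr0.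
rewrite /h IH /digit_val /code /= size_map natrD natrM natrX exprS.
have : (3 : RR) ^+ size w != 0 by rewrite expf_neq0 // pnatr_eq0.
move: (3 ^+ size w) => t t_neq0.
by case: (v i); rewrite ?mul0r ?add0r; field; rewrite t_neq0 /=; lra.
Qed.

Lemma coord_le_dist (x z : point d) (i : 'I_d) : `|x i - z i| <= dist x z.
Proof.
rewrite /dist -(sqrtr_sqr (x i - z i)) ler_sqrt ?sumr_ge0 // => [|j _].
  by rewrite (bigD1 i) //= lerDl sumr_ge0 // => j _; exact: sqr_ge0.
exact: sqr_ge0.
Qed.

Lemma code_near (w : seq (digit d)) (x z : point d) (i : 'I_d) :
  in_cube w x -> `|x i - z i| < 3 ^- size w ->
  `|(code i w)%:R - 3 ^+ size w * z i| <= 2.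
Proof.
move=> [y [y_cube ->]]; rewrite hw_coord; set N : RR := 3 ^+ size w.
have N_gt0 : 0 < N by rewrite exprn_gt0.
set u := (y i + _) / N - z i => u_lt.
have Nu_le1 : `|N * u| <= 1.
  by rewrite normrM gtr0_norm // -(mulfV (lt0r_neq0 N_gt0)) ler_pM2l // ltW.
have -> : (code i w)%:R - N * z i = N * u - y i.
  by rewrite /u; field; exact: lt0r_neq0.
have /andP[y_ge0 y_le1] := y_cube i.
by move: Nu_le1; rewrite !ler_norml => /andP[? ?]; apply/andP; split; lra.
Qed.

Definition code_defect (a : point d) (b : RR) (w : seq (digit d)) : RR :=
  \sum_i a i * (code i w)%:R - 3 ^+ size w * b.

Lemma code_defect_near (a : point d) (b : RR) (w : seq (digit d)) (x z : point d) :
  in_cube w x -> hyperplane a b z -> dist x z < 3 ^- size w ->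
  `|code_defect a b w| <= 2 * \sum_i `|a i|.
Proof.
move=> x_cube <- dist_xz.
have -> : code_defect a (\sum_i a i * z i) w
          = \sum_i a i * ((code i w)%:R - 3 ^+ size w * z i).
  rewrite /code_defect mulr_sumr -sumrB; apply: eq_bigr => i _; ring.
apply: le_trans (ler_norm_sum _ _ _) _; rewrite mulr_sumr.
apply: ler_sum => i _; rewrite normrM mulrC ler_wpM2r //.
by apply: code_near x_cube _; apply: le_lt_trans (coord_le_dist x z i) dist_xz.
Qed.

Lemma code_defectB (a : point d) (b : RR) (i0 : 'I_d) (w1 w2 : seq (digit d)) :
  size w1 = size w2 -> (forall i, i != i0 -> column i w1 = column i w2) ->
  code_defect a b w1 - code_defect a b w2
    = a i0 * ((code i0 w1)%:R - (code i0 w2)%:R).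
Proof.
move=> size_w12 col_w12; rewrite /code_defect size_w12.
rewrite (bigD1 i0 (F := fun i => a i * (code i w1)%:R)) //=.
rewrite (bigD1 i0 (F := fun i => a i * (code i w2)%:R)) //=.
rewrite (eq_bigr (fun i => a i * (code i w2)%:R)) => [|i /col_w12]; last first.
  by rewrite /code => ->.
ring.
Qed.

Definition near_codes (a : point d) (b : RR) (n : nat) : {set n.-tuple (digit d)} :=
  [set w : n.-tuple (digit d) | `|code_defect a b w| <= 2 * \sum_i `|a i|].

End Columns.

Definition drop_coord (d : nat) (i0 : 'I_d.+1) (v : digit d.+1) : digit d :=
  [ffun j => v (lift i0 j)].

Lemma drop_coord_columns (d : nat) (i0 : 'I_d.+1) (w1 w2 : seq (digit d.+1)) :
  map (drop_coord i0) w1 = map (drop_coord i0) w2 ->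
  forall i, i != i0 -> column i w1 = column i w2.
Proof.
have col_drop w j : column j (map (drop_coord i0) w) = column (lift i0 j) w.
  by elim: w => //= v w ->; rewrite ffunE.
move=> drop_w12 i; case: (unliftP i0 i) => [j ->|->]; last by rewrite eqxx.
by rewrite -!col_drop drop_w12.
Qed.

Lemma card_near_codes (d : nat) (a : point d.+1) (b : RR) (i0 : 'I_d.+1) (n : nat) :
  a i0 != 0 -> (forall i, `|a i| <= `|a i0|) ->
  (#|near_codes a b n| <= (4 * d.+1).+1 * 2 ^ (d * n))%N.
Proof.
move=> a_i0 a_max.
have drop_eq_columns w1 w2 : map_tuple (drop_coord i0) w1 = map_tuple (drop_coord i0) w2 ->
    forall i, i != i0 -> column i w1 = column i w2.
  by move/(congr1 val); apply: drop_coord_columns.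
apply: leq_trans (card_le_window (f := map_tuple (drop_coord i0))
                    (e := code i0) (k := 4 * d.+1) _ _) _.
- move=> w1 w2; rewrite !inE => near1 near2 /drop_eq_columns cols12.
  have size_w12 : size w1 = size w2 by rewrite !size_tuple.
  have defectB := code_defectB a b size_w12 cols12.
  have sum_le : \sum_i `|a i| <= d.+1%:R * `|a i0|.
    apply: le_trans (ler_sum _ (fun i _ => a_max i)) _.
    by rewrite sumr_const card_ord mulr_natl.
  have : `|a i0| * `|(code i0 w1)%:R - (code i0 w2)%:R| <= `|a i0| * (4 * d.+1)%:R.
    rewrite -normrM -defectB natrM; apply: le_trans (ler_normB _ _) _; lra.
  by rewrite ler_pM2l ?normr_gt0 // ler_norml -(ler_nat RR) natrD => /andP[_]; lra.
- move=> w1 w2 _ _ /drop_eq_columns cols12 code12; apply: val_inj; apply: columns_inj.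
    by rewrite !size_tuple.
  move=> i; have [->|/cols12 //] := eqVneq i i0.
  by apply: ternary_inj; rewrite // !size_map !size_tuple.
by rewrite card_tuple card_ffun card_bool card_ord -expnM mulnC.
Qed.

Theorem mainTheorem6 :
  forall d : nat, (1 <= d)%N ->
  exists C : RR,
    forall (a : point d) (b : RR), (exists i, a i <> 0) ->
    forall n : nat,
      exists W : {set n.-tuple (digit d)},
        (#|W|%:R <= C * 2 ^+ ((d - 1) * n))%R /\
        forall x : point d,
          cantor_d x -> nbhd (hyperplane a b) (3 ^- n) x ->
          exists2 w, w \in W & in_cube (tval w) x.
Proof.
move=> [|d] // _; exists (4 * d.+1).+1%:R => a b [i1 /eqP a_i1] n.
have [i0 _ a_max] := @arg_maxP _ _ _ i1 xpredT (fun i => `|a i|) isT.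
have a_i0 : a i0 != 0.
  by rewrite -normr_gt0; apply: lt_le_trans (a_max i1 isT); rewrite normr_gt0.
exists (near_codes a b n); split.
  rewrite subn1 -natrX -natrM ler_nat.
  by apply: (@card_near_codes d a b i0 n) => // i; apply: a_max.
move=> x x_cantor [z [z_hyp dist_xz]]; have [w x_cube] := x_cantor n.
exists w => //; rewrite inE.
by apply: code_defect_near x_cube z_hyp _; rewrite size_tuple.
Qed.
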